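(* Let $r\ge5$ and let $T$ be a $K_r$-tree composed of copies $H_1,\dots,H_\vartheta$ of $K_r$. Then: (1) every clique in $T$ is contained in some $H_i$; (2) if two distinct vertices $x\ne y$ of $T$ have at least three common neighbors in $T$, then $x$ and $y$ are adjacent in $T$.
   Context: A graph $T$ is a $K_r$-tree (clique tree) of order $\vartheta$ if it is the union of $\vartheta$ copies $H_1,\dots,H_\vartheta$ of $K_r$ such that, for every $1<i\le\vartheta$, $H_i$ shares exactly one edge with $H_1\cup\cdots\cup H_{i-1}$, i.e. the common vertices of $H_i$ and $H_1\cup\cdots\cup H_{i-1}$ are exactly the two endpoints of a single edge of $H_1\cup\cdots\cup H_{i-1}$. *)

From mathcomp Require Import all_boot.
Set Implicit Arguments. Unset Strict Implicit. Unset Printing Implicit Defensive.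

(* A K_r-tree is given by the sequence Hs = [:: H_1; ...; H_theta] of vertex
   sets of the copies of K_r, inside an ambient finite type V.  The graph T
   is the union of these cliques. *)
Section KrTree.
Variable V : finType.

Definition uverts (Hs : seq {set V}) : {set V} := \bigcup_(H <- Hs) H.

Definition uadj (Hs : seq {set V}) (x y : V) : bool :=
  (x != y) && has (fun H : {set V} => (x \in H) && (y \in H)) Hs.

(* Hs is a K_r-tree of order size Hs >= 1: each H_i is a copy of K_r
   (r vertices), and for every 1 < i <= theta, H_i meets H_1 u ... u H_(i-1)
   in exactly the two endpoints of an edge of H_1 u ... u H_(i-1). *)
Definition is_Kr_tree (r : nat) (Hs : seq {set V}) : Prop :=
  [/\ 0 < size Hs,
      all (fun H : {set V} => #|H| == r) Hs
    & forall i, 0 < i < size Hs ->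
        exists a b : V,
          [/\ uadj (take i Hs) a b &
              nth set0 Hs i :&: uverts (take i Hs) = [set a; b]]].

Definition uclique (Hs : seq {set V}) (C : {set V}) : Prop :=
  C \subset uverts Hs /\ {in C &, forall x y, x != y -> uadj Hs x y}.

End KrTree.

From mathcomp Require Import all_boot.
Set Implicit Arguments. Unset Strict Implicit. Unset Printing Implicit Defensive.

(* Build the K_r-tree one copy of K_r at a time.  The new copy H meets the
   current graph in at most two vertices, which are adjacent there.  Every
   edge that appears is either old or lies inside H, so a clique either
   contains a vertex outside H, and then lies in the old graph, or lies in H.
   Two vertices that are not both old have at most the (at most two)
   attachment vertices as common neighbours, unless both lie in H; two old
   vertices with a new common neighbour lie in H and are hence old-adjacent.
   Neither the size r of the copies nor the bound 4 < r plays any role. *)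

Section UnionGraph.
Variable V : finType.
Implicit Types (Hs : seq {set V}) (H C : {set V}) (x y z : V).

Lemma in_uverts Hs x : (x \in uverts Hs) = has (fun H => x \in H) Hs.
Proof.
rewrite /uverts; elim: Hs => [|H Hs IH]; first by rewrite big_nil inE.
by rewrite big_cons inE IH.
Qed.

Lemma uverts_rcons Hs H x :
  (x \in uverts (rcons Hs H)) = (x \in H) || (x \in uverts Hs).
Proof. by rewrite !in_uverts has_rcons. Qed.

Lemma uadjC Hs x y : uadj Hs x y = uadj Hs y x.
Proof. by rewrite /uadj eq_sym; congr (_ && _); apply: eq_has => H; apply: andbC. Qed.

Lemma uadj_uverts Hs x y : uadj Hs x y -> (x \in uverts Hs) && (y \in uverts Hs).
Proof.
rewrite /uadj !in_uverts => /andP[_ /hasP[H HHs /andP[xH yH]]].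
by apply/andP; split; apply/hasP; exists H.
Qed.

Lemma uadj_rcons Hs H x y :
  uadj (rcons Hs H) x y = uadj Hs x y || [&& x != y, x \in H & y \in H].
Proof. by rewrite /uadj has_rcons; case: (x != y) => //=; rewrite orbC. Qed.

Lemma uclique_set2 Hs x y : uadj Hs x y -> uclique Hs [set x; y].
Proof.
move=> xy; split.
  by apply/subsetP => z; case/uadj_uverts/andP: xy => xV yV; rewrite !inE => /orP[]/eqP->.
by move=> u v; rewrite !inE => /orP[]/eqP-> /orP[]/eqP->; rewrite ?eqxx // uadjC.
Qed.

Definition common_nbrs Hs x y : {set V} := [set z | uadj Hs x z && uadj Hs y z].

Lemma common_nbrsC Hs x y : common_nbrs Hs x y = common_nbrs Hs y x.
Proof. by apply/setP => z; rewrite !inE andbC. Qed.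

Definition cliques_in_blocks Hs : Prop :=
  forall C, uclique Hs C -> C != set0 -> exists2 H, H \in Hs & C \subset H.

Definition common_nbrs_adj Hs : Prop :=
  forall x y, x != y -> 2 < #|common_nbrs Hs x y| -> uadj Hs x y.

Definition attaches_along_edge Hs H : Prop :=
  uclique Hs (H :&: uverts Hs) /\ #|H :&: uverts Hs| <= 2.

Section Attach.
Variables (Hs : seq {set V}) (H : {set V}).
Hypothesis attach_clique : uclique Hs (H :&: uverts Hs).
Hypothesis attach_small : #|H :&: uverts Hs| <= 2.

Lemma uadj_rcons_new {x y} :
  x \notin uverts Hs -> uadj (rcons Hs H) x y -> (x \in H) && (y \in H).
Proof.
move=> xU; rewrite uadj_rcons => /orP[/uadj_uverts/andP[xU' _]|/and3P[_ -> ->]] //.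
by rewrite xU' in xU.
Qed.

Lemma uadj_rcons_old {x y} : x \in uverts Hs -> y \in uverts Hs ->
  uadj (rcons Hs H) x y = uadj Hs x y.
Proof.
move=> xU yU; rewrite uadj_rcons.
apply/orP/idP => [[//|/and3P[xy xH yH]]|->]; last by left.
by apply: attach_clique.2; rewrite // inE ?xH ?yH.
Qed.

Lemma cliques_in_blocks_rcons :
  cliques_in_blocks Hs -> cliques_in_blocks (rcons Hs H).
Proof.
move=> blocks C [CV Cadj] C0.
have HHs : H \in rcons Hs H by rewrite mem_rcons mem_head.
have [CH|/subsetPn[d dC dH]] := boolP (C \subset H); first by exists H.
have dU : d \in uverts Hs.
  by move/subsetP: CV => /(_ d dC); rewrite uverts_rcons (negbTE dH).
have CU : C \subset uverts Hs.
  apply/subsetP => v vC; apply: contraNT dH => vU.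
  have vd : v != d by apply: contraNneq vU => ->.
  by case/andP: (uadj_rcons_new vU (Cadj v d vC dC vd)).
have [G GHs CG] : exists2 G, G \in Hs & C \subset G.
  apply: blocks C0; split=> // u v uC vC uv.
  by rewrite -uadj_rcons_old ?Cadj ?(subsetP CU).
by exists G; rewrite // mem_rcons in_cons GHs orbT.
Qed.

Lemma common_nbrs_rcons_new x y : x \notin uverts Hs -> y \notin H ->
  common_nbrs (rcons Hs H) x y \subset H :&: uverts Hs.
Proof.
move=> xU yH; apply/subsetP => z; rewrite !inE => /andP[xz yz].
case/andP: (uadj_rcons_new xU xz) => _ ->; apply: contraNT yH => zU.
by rewrite uadjC in yz; case/andP: (uadj_rcons_new zU yz).
Qed.

Lemma common_nbrs_adj_rcons :
  common_nbrs_adj Hs -> common_nbrs_adj (rcons Hs H).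
Proof.
move=> nbrs_adj.
have new_vertex x y : x \notin uverts Hs -> x != y ->
    2 < #|common_nbrs (rcons Hs H) x y| -> uadj (rcons Hs H) x y.
  move=> xU xy many.
  have [z] : exists z, z \in common_nbrs (rcons Hs H) x y.
    by apply/set0Pn; rewrite -card_gt0 (ltn_trans _ many).
  rewrite inE => /andP[/(uadj_rcons_new xU)/andP[xH _] _].
  have [yH|yH] := boolP (y \in H); first by rewrite uadj_rcons xy xH yH orbT.
  move: many; rewrite ltnNge (leq_trans (subset_leq_card _) attach_small) //.
  exact: common_nbrs_rcons_new.
move=> x y xy many.
have [xU|] := boolP (x \in uverts Hs); last by move/new_vertex; apply.
have [yU|yU] := boolP (y \in uverts Hs); last first.
  by rewrite uadjC new_vertex 1?eq_sym // common_nbrsC.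
have [z /andP[zU]|old] :=
    pickP [pred z | (z \notin uverts Hs) && (z \in common_nbrs (rcons Hs H) x y)].
  rewrite inE => /andP[zx zy].
  rewrite uadjC in zx; rewrite uadjC in zy.
  case/andP: (uadj_rcons_new zU zx) => _ xH; case/andP: (uadj_rcons_new zU zy) => _ yH.
  by rewrite uadj_rcons_old // attach_clique.2 ?inE ?xH ?yH.
rewrite uadj_rcons_old // nbrs_adj // (leq_trans many) // subset_leq_card //.
apply/subsetP => z zN; have := old z; rewrite /= zN andbT => /negbFE zU.
by move: zN; rewrite !inE !uadj_rcons_old.
Qed.

End Attach.

Definition edge_glued Hs : Prop :=
  forall i, i < size Hs -> attaches_along_edge (take i Hs) (nth set0 Hs i).

Lemma Kr_tree_edge_glued r Hs : is_Kr_tree r Hs -> edge_glued Hs.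
Proof.
case=> _ _ glue [|i] lt_i; rewrite /attaches_along_edge.
  have -> : uverts (take 0 Hs) = set0 by rewrite take0 /uverts big_nil.
  by rewrite setI0 cards0; split=> //; split=> [|u]; rewrite ?sub0set ?inE.
have [a [b [ab ->]]] := glue i.+1 lt_i.
by split; [apply: uclique_set2 | rewrite cards2; case: (a != b)].
Qed.

Lemma edge_glued_props Hs :
  edge_glued Hs -> cliques_in_blocks Hs /\ common_nbrs_adj Hs.
Proof.
move=> attach; rewrite -(take_size Hs).
elim: {-2}(size Hs) (leqnn (size Hs)) => [|n IHn] le_n.
  rewrite take0 /cliques_in_blocks /common_nbrs_adj.
  split=> [C [CV _] /set0Pn[c cC]|x y _].
    by move: (subsetP CV c cC); rewrite in_uverts.
  suff -> : common_nbrs [::] x y = set0 by rewrite cards0.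
  by apply/setP => z; rewrite !inE /uadj /= !andbF.
have [blocks nbrs] := IHn (ltnW le_n); have [cl small] := attach n le_n.
rewrite (take_nth set0 le_n); split.
  exact: cliques_in_blocks_rcons.
exact: common_nbrs_adj_rcons.
Qed.

End UnionGraph.

Theorem claim4p12 (V : finType) (r : nat) (Hs : seq {set V}) :
  4 < r -> is_Kr_tree r Hs ->
  (forall C : {set V}, uclique Hs C -> exists2 H, H \in Hs & C \subset H) /\
  (forall x y : V, x \in uverts Hs -> y \in uverts Hs -> x != y ->
     2 < #|[set z | uadj Hs x z && uadj Hs y z]| -> uadj Hs x y).
Proof.
move=> _ tree.
have [blocks nbrs_adj] := edge_glued_props (Kr_tree_edge_glued tree).
split=> [C clC | x y _ _]; last exact: nbrs_adj.
have [-> | C0] := eqVneq C set0; last exact: blocks.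
by case: tree => size_gt0 _ _; exists (nth set0 Hs 0); rewrite ?mem_nth ?sub0set.
Qed.
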